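(* Let $\mathbf{HC}=(h_n)_{n\ge 0}$ be the infinite Hilbert curve direction word defined in the context. Let $M$ be the deterministic finite automaton with output with state set $\{0,1,\dots,7\}$, input alphabet $\{0,1,2,3\}$, initial state $0$, and transition function $\delta$ and output function $\tau$ given by the following table (row $q$ lists $\delta(q,0),\delta(q,1),\delta(q,2),\delta(q,3)$ and then $\tau(q)$): $0: 0,1,2,3;\ \mathtt{U}$; $1: 1,0,4,5;\ \mathtt{R}$; $2: 1,0,4,6;\ \mathtt{D}$; $3: 7,6,5,0;\ \mathtt{R}$; $4: 0,1,2,7;\ \mathtt{L}$; $5: 6,7,3,1;\ \mathtt{U}$; $6: 6,7,3,2;\ \mathtt{L}$; $7: 7,6,5,4;\ \mathtt{D}$. Then for every $n\ge 0$, $h_n=\tau(\delta(0,(n)_4))$, where $(n)_4$ is the canonical base-$4$ representation of $n$ (most significant digit first, $(0)_4$ the empty word) and $\delta$ is extended to words in the usual way. In particular $\mathbf{HC}$ is $4$-automatic.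
   Context: Directions are letters of the alphabet $\{\mathtt{U},\mathtt{D},\mathtt{R},\mathtt{L}\}$ (up, down, right, left). Let $t_D$ be the letter-to-letter morphism with $t_D(\mathtt{U})=\mathtt{R}$, $t_D(\mathtt{D})=\mathtt{L}$, $t_D(\mathtt{R})=\mathtt{U}$, $t_D(\mathtt{L})=\mathtt{D}$ (flip about the main diagonal), and $t_H$ the morphism with $t_H(\mathtt{U})=\mathtt{D}$, $t_H(\mathtt{D})=\mathtt{U}$, $t_H(\mathtt{R})=\mathtt{L}$, $t_H(\mathtt{L})=\mathtt{R}$ ($180^\circ$ rotation). Define words $A_n$ by $A_0=\epsilon$ (empty word) and, for $n\ge 0$, $A_{2n+1}=A_{2n}\,\mathtt{U}\,t_D(A_{2n})\,\mathtt{R}\,t_D(A_{2n})\,\mathtt{D}\,t_H(A_{2n})$, $A_{2n+2}=A_{2n+1}\,\mathtt{R}\,t_D(A_{2n+1})\,\mathtt{U}\,t_D(A_{2n+1})\,\mathtt{L}\,t_H(A_{2n+1})$. Each $A_n$ is a prefix of $A_{n+1}$, and $\mathbf{HC}=h_0h_1h_2\cdots$ is the unique infinite word having every $A_n$ as a prefix (so $\mathbf{HC}=\mathtt{URDRRULURULLD}\cdots$). *)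

From HB Require Import structures.
From mathcomp Require Import all_boot.
Set Implicit Arguments. Unset Strict Implicit. Unset Printing Implicit Defensive.

Inductive dir := U | D | R | L.

Definition dir_eqb (a b : dir) : bool :=
  match a, b with U,U | D,D | R,R | L,L => true | _,_ => false end.
Lemma dir_eqP : Equality.axiom dir_eqb.
Proof. by case; case; constructor. Qed.
HB.instance Definition _ := hasDecEq.Build dir dir_eqP.

Definition tD1 (a : dir) : dir :=
  match a with U => R | D => L | R => U | L => D end.
Definition tH1 (a : dir) : dir :=
  match a with U => D | D => U | R => L | L => R end.
Definition tD (w : seq dir) : seq dir := map tD1 w.
Definition tH (w : seq dir) : seq dir := map tH1 w.

Fixpoint A (n : nat) : seq dir :=
  match n with
  | 0 => [::]
  | k.+1 =>
    let a := A k in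
    if odd k
    then a ++ [:: R] ++ tD a ++ [:: U] ++ tD a ++ [:: L] ++ tH a
    else
         a ++ [:: U] ++ tD a ++ [:: R] ++ tD a ++ [:: D] ++ tH a
  end.

(* The infinite word HC = h_0 h_1 ... : the unique word having every A_n as a
   prefix.  Since |A_{n+1}| = 4^{n+1} - 1 > n, the letter h_n is the n-th letter
   of A_{n+1} (U is only a dummy default for nth, never used). *)
Definition HC (n : nat) : dir := nth U (A n.+1) n.

Definition delta (q d : nat) : nat :=
  match q, d with
  | 0, 0 => 0 | 0, 1 => 1 | 0, 2 => 2 | 0, 3 => 3
  | 1, 0 => 1 | 1, 1 => 0 | 1, 2 => 4 | 1, 3 => 5
  | 2, 0 => 1 | 2, 1 => 0 | 2, 2 => 4 | 2, 3 => 6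
  | 3, 0 => 7 | 3, 1 => 6 | 3, 2 => 5 | 3, 3 => 0
  | 4, 0 => 0 | 4, 1 => 1 | 4, 2 => 2 | 4, 3 => 7
  | 5, 0 => 6 | 5, 1 => 7 | 5, 2 => 3 | 5, 3 => 1
  | 6, 0 => 6 | 6, 1 => 7 | 6, 2 => 3 | 6, 3 => 2
  | 7, 0 => 7 | 7, 1 => 6 | 7, 2 => 5 | 7, 3 => 4
  | _, _ => q (* unreachable: states are 0..7, digits 0..3 *)
  end.

Definition tau (q : nat) : dir :=
  match q with
  | 0 => U | 1 => R | 2 => D | 3 => R
  | 4 => L | 5 => U | 6 => L | _ => D
  end.

Definition delta_star (q : nat) (w : seq nat) : nat := foldl delta q w.

Fixpoint base4_rev (fuel n : nat) : seq nat :=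
  match fuel with
  | 0 => [::]
  | f.+1 => if n == 0 then [::] else (n %% 4) :: base4_rev f (n %/ 4)
  end.

(* canonical base-4 representation (n)_4, most significant digit first,
   (0)_4 = empty word; fuel n suffices since n %/ 4 < n for n > 0. *)
Definition base4 (n : nat) : seq nat := rev (base4_rev n n).

From mathcomp Require Import all_boot zify.

(* A_{k+1} consists of the four copies A_k, t_D A_k, t_D A_k, t_H A_k of A_k
   joined by three connector letters that depend only on the parity of k.
   Attach to each state q of M a symmetry sigma_q of the square, with sigma_0
   the identity.  By induction on k, reading the k-digit base-4 expansion of
   r < 4^k - 1 from q outputs sigma_q of the r-th letter of A_k: the leading
   digit j selects a copy, and sigma_(delta q j) = sigma_q o (symmetry of copy j).
   When the remaining digits are all 3 the position is a connector; delta(., 3)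
   is an involution, so the output depends on the parity of k, as the connectors
   do.  Finally, leading zeros keep M in state 0. *)

Fixpoint digits (b k r : nat) : seq nat :=
  if k is k'.+1 then r %/ b ^ k' :: digits b k' (r %% b ^ k') else [::].

Section Digits.

Variable b : nat.
Hypothesis b_gt0 : 0 < b.

Lemma digits0 k : digits b k 0 = nseq k 0.
Proof. by elim: k => //= k IH; rewrite div0n mod0n IH. Qed.

Lemma digitsS_rcons k r : r < b ^ k.+1 ->
  digits b k.+1 r = rcons (digits b k (r %/ b)) (r %% b).
Proof.
elim: k r => [|k IH] r r_lt; first by rewrite /= divn1 modn_small.
rewrite [LHS]/digits -/(digits b k.+1 _) IH ?ltn_pmod ?expn_gt0 ?b_gt0 //.
rewrite [digits b k.+1 _]/digits -/(digits b k _) expnS divnMA modn_divl mulnC.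
by rewrite (modn_dvdm _ (dvdn_mull _ (dvdnn b))).
Qed.

Lemma digits_max k : digits b k (b ^ k).-1 = nseq k b.-1.
Proof.
elim: k => //= k IH.
have bk_gt0 : 0 < b ^ k by rewrite expn_gt0 b_gt0.
have -> : (b ^ k.+1).-1 = b.-1 * b ^ k + (b ^ k).-1.
  by rewrite expnS; case: b b_gt0 => // b' _; rewrite mulSn; lia.
by rewrite divnMDl // modnMDl divn_small ?modn_small ?addn0 ?IH ?prednK.
Qed.

End Digits.

Lemma digits_base4_rev f k n : n <= f -> n < 4 ^ k ->
  exists m, digits 4 k n = nseq m 0 ++ rev (base4_rev f n).
Proof.
elim: f n k => [|f IH] n k n_le n_lt.
  by exists k; move: n_le; rewrite leqn0 => /eqP->; rewrite digits0 cats0.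
rewrite /=; case: eqP => [->|n_ne0]; first by exists k; rewrite digits0 cats0.
case: k n_lt => [|k] n_lt; first by rewrite expn0 in n_lt; lia.
rewrite digitsS_rcons //.
have n4_le : n %/ 4 <= f by rewrite -ltnS (leq_trans _ n_le) // ltn_Pdiv //; lia.
have n4_lt : n %/ 4 < 4 ^ k by rewrite ltn_divLR // -expnSr.
have [m ->] := IH _ _ n4_le n4_lt.
by exists m; rewrite rev_cons rcons_cat.
Qed.

Lemma nth_cat_cons (T : Type) (x0 y : T) (u v : seq T) n i : size u = n ->
  nth x0 (u ++ y :: v) (n.+1 + i) = nth x0 v i.
Proof. by move=> <-; rewrite nth_cat ifF ?addSn ?subSn ?leq_addr ?addKn //; lia. Qed.

Definition quarter_sym (j : nat) : dir -> dir :=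
  match j with 0 => id | 1 | 2 => tD1 | _ => tH1 end.

Definition connector (b : bool) (j : nat) : dir :=
  nth U (if b then [:: R; U; L] else [:: U; R; D]) j.

Definition quad (a : seq dir) (x : nat -> dir) : seq dir :=
  a ++ x 0 :: tD a ++ x 1 :: tD a ++ x 2 :: tH a.

Lemma A_S k : A k.+1 = quad (A k) (connector (odd k)).
Proof. by rewrite /=; case: odd. Qed.

Lemma size_quad a x : size (quad a x) = 4 * (size a).+1 - 1.
Proof.
by rewrite /quad /tD /tH !size_cat /= !size_cat /= !size_cat /= !size_map; lia.
Qed.

Lemma size_A k : size (A k) = (4 ^ k).-1.
Proof.
elim: k => // k IH; rewrite A_S size_quad IH prednK ?expn_gt0 //.
by rewrite expnS subn1.
Qed.

Lemma nth_quad_inner a x j r : r < size a -> j < 4 ->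
  nth U (quad a x) (j * (size a).+1 + r) = quarter_sym j (nth U a r).
Proof.
move=> r_lt; case: j => [|[|[|[|//]]]] _.
all: rewrite /quad /tD /tH ?mulSn ?mul0n ?add0n ?addn0 -?addnA.
all: by rewrite ?nth_cat_cons ?size_map // ?nth_cat ?size_map ?r_lt ?(nth_map U).
Qed.

Lemma nth_quad_connector a x j : j < 3 ->
  nth U (quad a x) (j * (size a).+1 + size a) = x j.
Proof.
case: j => [|[|[|//]]] _; rewrite /quad /tD /tH ?mulSn ?mul0n ?add0n ?addn0 -?addnA.
all: by rewrite ?nth_cat_cons ?size_map // nth_cat ?size_map ltnn subnn.
Qed.

Definition state_sym (q : nat) : dir -> dir :=
  match q with 0 | 4 => id | 1 | 2 => tD1 | 3 | 7 => tH1 | _ => tD1 \o tH1 end.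

Lemma delta_lt8 q j : q < 8 -> delta q j < 8.
Proof. by do 8?[case: q => [|q] //]; do 4?[case: j => [|j] //]. Qed.

Lemma delta3_involutive : involutive (delta^~ 3).
Proof. by move=> q; do 8?[case: q => [|q] //]. Qed.

Lemma delta_star_nseq3 q k :
  delta_star q (nseq k 3) = if odd k then delta q 3 else q.
Proof.
elim: k q => // k IH q; rewrite [LHS]IH /=.
by case: odd; rewrite ?delta3_involutive.
Qed.

Lemma delta_star0_nseq0 m : delta_star 0 (nseq m 0) = 0.
Proof. by elim: m. Qed.

Lemma state_sym_delta q j c : q < 8 -> j < 4 ->
  state_sym (delta q j) c = state_sym q (quarter_sym j c).
Proof. by do 8?[case: q => [|q] //]; do 4?[case: j => [|j] //]; case: c. Qed.

Lemma tau_connector q j k : q < 8 -> j < 3 ->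
  tau (delta_star (delta q j) (nseq k 3)) = state_sym q (connector (odd k) j).
Proof.
rewrite delta_star_nseq3.
by case: odd; do 8?[case: q => [|q] //]; do 3?[case: j => [|j] //].
Qed.

Lemma tau_delta_star_digits k q r : q < 8 -> r < (4 ^ k).-1 ->
  tau (delta_star q (digits 4 k r)) = state_sym q (nth U (A k) r).
Proof.
elim: k q r => [|k IH] q r q_lt r_lt; first by rewrite expn0 in r_lt.
have pow_gt0 : 0 < 4 ^ k by rewrite expn_gt0.
set j := r %/ 4 ^ k; set r' := r %% 4 ^ k.
have r_eq : r = j * (size (A k)).+1 + r'.
  by rewrite size_A prednK // [LHS](divn_eq r (4 ^ k)).
have j_lt : j < 4 by rewrite ltn_divLR // -expnS; lia.
have r'_lt : r' < 4 ^ k by rewrite ltn_mod.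
rewrite -[delta_star q _]/(delta_star (delta q j) (digits 4 k r')) A_S r_eq.
have [r'_lt_max | r'_max] := ltnP r' (4 ^ k).-1.
  by rewrite IH ?delta_lt8 // state_sym_delta // nth_quad_inner // size_A.
(* r is the position of the connector following the j-th copy *)
have {r'_max} r'_eq : r' = (4 ^ k).-1 by lia.
have j_lt3 : j < 3.
  by move: r_lt; rewrite r_eq size_A r'_eq prednK // expnS; nia.
by rewrite r'_eq size_A digits_max // tau_connector // -size_A nth_quad_connector.
Qed.

Theorem mainTheorem1 : forall n : nat, HC n = tau (delta_star 0 (base4 n)).
Proof.
move=> n.
have n_lt : n < (4 ^ n.+1).-1 by have := ltn_expl n.+1 (isT : 1 < 4); lia.
have [m digits_n] := @digits_base4_rev n n.+1 n (leqnn n) (leq_trans n_lt (leq_pred _)).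
rewrite /HC -[nth U _ _]/(state_sym 0 _) -tau_delta_star_digits // digits_n.
by rewrite /delta_star foldl_cat -/(delta_star 0 (nseq m 0)) delta_star0_nseq0.
Qed.
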